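(* Let $p, q$ be probability distributions on a finite set $\mathcal{X}$ with $\mathrm{supp}(p)\subseteq\mathrm{supp}(q)$, let $L>0$, and let $\rho(x) := \log_2(p(x)/q(x))$ for $x\in\mathrm{supp}(p)$. Define $\eta_L(p,q) := D_{\mathrm{KL}}(p\|q) - D_{\mathrm{KL},L}(p\|q)$. Then \[ |\eta_L(p,q)| \le \mathbb{E}_{X\sim p}\bigl[(|\rho(X)|-L)\,\mathbf{1}\{|\rho(X)|>L\}\bigr], \] and hence \[ |\eta_L(p,q)| \le \Bigl(\log_2(1/p_{\min}) + \log_2(1/q_{\min})\Bigr)\Pr_{X\sim p}\bigl[|\rho(X)|>L\bigr], \] where $p_{\min} = \min_{x\in\mathrm{supp}(p)} p(x)$ and $q_{\min} = \min_{x\in\mathrm{supp}(q)} q(x)$. In particular, if $2^{-L}p(x)\le q(x)\le 2^{L}p(x)$ for every $x\in\mathrm{supp}(p)$ (equivalently $|\rho(x)|\le L$ on $\mathrm{supp}(p)$), then $\eta_L(p,q)=0$ and $D_{\mathrm{KL},L}(p\|q) = D_{\mathrm{KL}}(p\|q)$.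
   Context: All logarithms are base 2. $D_{\mathrm{KL}}(p\|q) = \sum_x p(x)\log_2(p(x)/q(x))$. For $u\in\mathbb{R}$, $\mathrm{clip}_L(u) := \max(-L,\min(L,u))$. The clipped log-ratio is $\ell_L(x) := \mathrm{clip}_L(\log_2(p(x)/q(x)))$ (with conventions $\log_2(p/0)=+\infty$ for $p>0$, $\log_2(0/q)=-\infty$ for $q>0$), and the clipped KL expectation is $D_{\mathrm{KL},L}(p\|q) := \sum_{x\in\mathcal{X}} p(x)\,\ell_L(x)$. *)

From HB Require Import structures.
From mathcomp Require Import all_boot all_order all_algebra.
From mathcomp Require Import all_classical all_reals all_analysis.
Set Implicit Arguments. Unset Strict Implicit. Unset Printing Implicit Defensive.
Import Order.TTheory GRing.Theory Num.Theory.
Local Open Scope ring_scope.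

Section Defs.
Variables (R : realType) (T : finType).

Definition log2 (x : R) : R := ln x / ln 2.

Definition is_distr (p : T -> R) : Prop := (forall x, 0 <= p x) /\ \sum_x p x = 1.

Definition supp_sub (p q : T -> R) : Prop := forall x, 0 < p x -> 0 < q x.

Definition clip (L u : R) : R := Num.max (- L) (Num.min L u).

(* KL divergence (convention 0 log 0 = 0: sum over supp p); finite when supp p ⊆ supp q *)
Definition DKL (p q : T -> R) : R :=
  \sum_(x | 0 < p x) p x * log2 (p x / q x).

(* clipped log-ratio with conventions log(p/0) = +oo (clipped to L) for p>0,
   log(0/q) = -oo (clipped to -L) for q>0 *)
Definition ellL (L : R) (p q : T -> R) (x : T) : R :=
  if (0 < p x) && (q x == 0) then L
  else if (p x == 0) && (0 < q x) then - L
  else clip L (log2 (p x / q x)).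

Definition DKL_L (L : R) (p q : T -> R) : R := \sum_x p x * ellL L p q x.

Definition etaL (L : R) (p q : T -> R) : R := DKL p q - DKL_L L p q.

Definition rho (p q : T -> R) (x : T) : R := log2 (p x / q x).

(* min over the support; p takes values in [0,1] so 1 is a harmless identity *)
Definition minsupp (p : T -> R) : R := \big[Num.min/1]_(x | 0 < p x) p x.

Definition excess (L : R) (p q : T -> R) : R :=
  \sum_(x | 0 < p x) p x * (if L < `|rho p q x| then `|rho p q x| - L else 0).

Definition tailprob (L : R) (p q : T -> R) : R :=
  \sum_(x | (0 < p x) && (L < `|rho p q x|)) p x.

End Defs.

(* Pointwise, [u - clip L u] has absolute value [(|u| - L)^+], so summing against
   p and using the triangle inequality bounds |eta_L| by the excess.  On supp p we
   have p_min <= p x <= 1 and q_min <= q x <= 1, hence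
   |rho x| <= log2 (1/p_min) + log2 (1/q_min), which bounds every nonzero term of
   the excess.  The ratio hypothesis says exactly |rho| <= L on supp p, so then
   the excess vanishes. *)
From HB Require Import structures.
From mathcomp Require Import all_boot all_order all_algebra.
From mathcomp Require Import all_classical all_reals all_analysis.
From mathcomp Require Import lra.
Import Order.TTheory GRing.Theory Num.Theory.
Local Open Scope ring_scope.
Set Implicit Arguments.
Unset Strict Implicit.

Section Log2.
Variable R : realType.
Implicit Types (x y L u : R).

Lemma ln2_gt0 : 0 < ln (2 : R).
Proof. by apply: ln_gt0; lra. Qed.

Lemma ler_log2 x y : 0 < x -> 0 < y -> (log2 x <= log2 y) = (x <= y).
Proof. by move=> x0 y0; rewrite /log2 ler_pM2r ?invr_gt0 ?ln2_gt0 // ler_ln. Qed.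

Lemma log2_le0 x : 0 < x -> x <= 1 -> log2 x <= 0.
Proof.
move=> x0 x1; suff: log2 x <= log2 1 by rewrite /log2 ln1 mul0r.
by rewrite ler_log2.
Qed.

Lemma log2_div x y : 0 < x -> 0 < y -> log2 (x / y) = log2 x - log2 y.
Proof.
move=> x0 y0; rewrite /log2 lnM ?posrE ?invr_gt0 // lnV ?posrE //.
by rewrite mulrDl mulNr.
Qed.

Lemma log2_inv x : 0 < x -> log2 (1 / x) = - log2 x.
Proof. by move=> x0; rewrite log2_div // /log2 ln1 mul0r sub0r. Qed.

Lemma log2_powR2M L x : 0 < x -> log2 (2 `^ L * x) = L + log2 x.
Proof.
move=> x0; have l2 := ln2_gt0.
rewrite /log2 lnM ?posrE ?powR_gt0 // ln_powR mulrDl mulfK //.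
by rewrite gt_eqF.
Qed.

Lemma normr_sub_clip L u : 0 <= L ->
  `|u - clip L u| = if L < `|u| then `|u| - L else 0.
Proof.
move=> L0; rewrite /clip.
have [uL|Lu] := leP u L.
  have [uNL|NLu] := ltP u (- L).
    have normuE : `|u| = - u by apply: ltr0_norm; lra.
    by rewrite normuE ifT ?ltr0_norm; lra.
  have -> : L < `|u| = false by apply/negbTE; rewrite -leNgt ler_norml; lra.
  by rewrite subrr normr0.
have normuE : `|u| = u by apply: gtr0_norm; lra.
by rewrite max_r ?normuE ?Lu ?gtr0_norm //; lra.
Qed.

End Log2.

Section Distributions.
Variables (R : realType) (T : finType).
Implicit Types (p q : T -> R) (L B : R).

Lemma distr_le1 p x : is_distr p -> p x <= 1.
Proof. by move=> [p0 <-]; rewrite (bigD1 x) //= lerDl sumr_ge0. Qed.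

Lemma minsupp_gt0 p : 0 < minsupp p.
Proof.
by apply: (big_ind (fun y => 0 < y)) => // a b a0 b0; rewrite lt_min a0 b0.
Qed.

Lemma minsupp_le p x : 0 < p x -> minsupp p <= p x.
Proof. by move=> px; rewrite /minsupp (bigD1 x) //= ge_min lexx. Qed.

Lemma oppr_log2_le_minsupp p x : is_distr p -> 0 < p x ->
  0 <= - log2 (p x) <= log2 (1 / minsupp p).
Proof.
move=> dp px; have m0 := minsupp_gt0 p.
rewrite log2_inv // lerN2 ler_log2 ?minsupp_le // oppr_ge0.
by rewrite log2_le0 ?distr_le1.
Qed.

Lemma normr_rho_le_minsupp p q x : is_distr p -> is_distr q -> 0 < p x -> 0 < q x ->
  `|rho p q x| <= log2 (1 / minsupp p) + log2 (1 / minsupp q).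
Proof.
move=> dp dq px qx; rewrite /rho log2_div // ler_norml.
move: (oppr_log2_le_minsupp dp px) (oppr_log2_le_minsupp dq qx).
by move=> /andP[? ?] /andP[? ?]; apply/andP; split; lra.
Qed.

Lemma normr_rho_le_ratio p q L x : 0 < p x ->
  2 `^ (- L) * p x <= q x <= 2 `^ L * p x -> `|rho p q x| <= L.
Proof.
move=> px /andP[lo hi].
have q0 : 0 < q x by apply: lt_le_trans lo; rewrite mulr_gt0 ?powR_gt0.
rewrite /rho log2_div // ler_norml.
rewrite -ler_log2 ?mulr_gt0 ?powR_gt0 // log2_powR2M // in lo.
rewrite -ler_log2 ?mulr_gt0 ?powR_gt0 // log2_powR2M // in hi.
by apply/andP; split; lra.
Qed.

Lemma etaL_sum p q L : is_distr p -> supp_sub p q ->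
  etaL L p q = \sum_(x | 0 < p x) p x * (rho p q x - clip L (rho p q x)).
Proof.
move=> [p0 _] sq; rewrite /etaL /DKL_L (bigID (fun x => 0 < p x)) /= /DKL.
rewrite [X in _ - (_ + X)]big1 => [|x]; last first.
  by rewrite -leNgt => pxle0; rewrite (@le_anti _ _ (p x) 0) ?pxle0 ?p0 ?mul0r.
rewrite addr0 -sumrB; apply: eq_bigr => x px.
by rewrite /ellL px (gt_eqF (sq x px)) (gt_eqF px) /rho mulrBr.
Qed.

Lemma normr_etaL_le_excess p q L : is_distr p -> supp_sub p q -> 0 <= L ->
  `|etaL L p q| <= excess L p q.
Proof.
move=> dp sq L0; rewrite etaL_sum //; apply: le_trans (ler_norm_sum _ _ _) _.
by apply: ler_sum => x px; rewrite normrM gtr0_norm // normr_sub_clip.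
Qed.

Lemma excess_le_tailprob p q L B : 0 <= L ->
  (forall x, 0 < p x -> `|rho p q x| <= B) -> excess L p q <= B * tailprob L p q.
Proof.
move=> L0 rhoB; rewrite /excess /tailprob mulr_sumr big_mkcondr /=.
apply: ler_sum => x px; case: ifP => _; last by rewrite mulr0.
by rewrite mulrC ler_pM2r //; have := rhoB x px; lra.
Qed.

Lemma excess_eq0 p q L : (forall x, 0 < p x -> `|rho p q x| <= L) ->
  excess L p q = 0.
Proof.
move=> rhoL; rewrite /excess big1 // => x px.
by rewrite ltNge rhoL // mulr0.
Qed.

End Distributions.

Unset Implicit Arguments.
Set Strict Implicit.

Theorem lemma1 (R : realType) (T : finType) (p q : T -> R) (L : R) :
  is_distr p -> is_distr q -> supp_sub p q -> 0 < L ->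
  `|etaL L p q| <= excess L p q /\
  `|etaL L p q| <= (log2 (1 / minsupp p) + log2 (1 / minsupp q)) * tailprob L p q /\
  ((forall x, 0 < p x -> (2 `^ (- L)) * p x <= q x /\ q x <= (2 `^ L) * p x) ->
     etaL L p q = 0 /\ DKL_L L p q = DKL p q).
Proof.
move=> dp dq sq /ltW L0; have etaE := normr_etaL_le_excess dp sq L0.
split => //; split.
  apply: le_trans etaE (excess_le_tailprob L0 _) => x px.
  exact: normr_rho_le_minsupp (sq x px).
move=> ratio; have rhoL x : 0 < p x -> `|rho p q x| <= L.
  by move=> px; have [lo hi] := ratio x px; apply: normr_rho_le_ratio; rewrite ?lo ?hi.
have eta0 : etaL L p q = 0.
  by apply/normr0_eq0/le_anti; rewrite normr_ge0 andbT -(excess_eq0 rhoL).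
by split => //; apply/eqP; rewrite eq_sym -subr_eq0 -/(etaL L p q) eta0.
Qed.
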